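(* Let $\alpha\ge1$ and $b\in(0,1]$. Let $\nu,\mu$ be the Gibbs distributions of two Ising models $(G,J^\nu,h^\nu)$ and $(G,J^\mu,h^\mu)$ that are both $b$-marginally bounded. Then $$D_{\chi^\alpha}(\nu\|\mu)\ \ge\ \frac{b^{2\alpha}}{2}\, d_{\mathrm{par}}(\nu,\mu)^\alpha .$$
   Context: An Ising model $(G,J,h)$ on $G=(V,E)$ consists of a symmetric $J\in\mathbb{R}^{V\times V}$ with $J_{uv}\ne0$ only if $\{u,v\}\in E$, and $h\in\mathbb{R}^V$; its Gibbs distribution on $\{-1,+1\}^V$ is $\mu(\sigma)\propto\exp(\tfrac12\sigma^TJ\sigma+h^T\sigma)$. The $\chi^\alpha$-divergence is $D_{\chi^\alpha}(\nu\|\mu)=\sum_\sigma\mu(\sigma)\cdot\frac12\left|\frac{\nu(\sigma)}{\mu(\sigma)}-1\right|^\alpha$. The parameter distance is $d_{\mathrm{par}}(\nu,\mu)=\max\left\{\max_{u,v}|J^\nu_{uv}-J^\mu_{uv}|,\ \max_{v\in V}\frac{|h^\nu(v)-h^\mu(v)|}{\deg(v)+1}\right\}$, with $\deg(v)$ the degree of $v$ in $G$. $\mu$ is $b$-marginally bounded if for every $\Lambda\subseteq V$, pinning $\sigma\in\{-1,+1\}^\Lambda$, $v\notin\Lambda$, $c\in\{-1,+1\}$, the conditional marginal probability that $v$ takes value $c$ given $\sigma$ on $\Lambda$ is at least $b$. *)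

From HB Require Import structures.
From mathcomp Require Import all_boot all_order all_algebra.
From mathcomp Require Import all_classical all_reals all_analysis.
Set Implicit Arguments. Unset Strict Implicit. Unset Printing Implicit Defensive.
Import Order.TTheory GRing.Theory Num.Theory.
Local Open Scope ring_scope.

Section Ising.
Variables (R : realType) (V : finType).

Definition config := {ffun V -> bool}.
Definition spin (b : bool) : R := if b then 1 else -1.

Definition simple_graph (E : rel V) : Prop :=
  (forall u v, E u v = E v u) /\ (forall v, ~~ E v v).

Definition deg (E : rel V) (v : V) : nat := #|[set u | E v u]|.

Definition ising_model (E : rel V) (J : V -> V -> R) (h : V -> R) : Prop :=
  (forall u v, J u v = J v u) /\ (forall u v, J u v != 0 -> E u v).

Definition gibbs_weight (J : V -> V -> R) (h : V -> R) (s : config) : R :=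
  expR (2^-1 * (\sum_u \sum_v J u v * spin (s u) * spin (s v))
        + \sum_v h v * spin (s v)).

Definition partition_fn (J : V -> V -> R) (h : V -> R) : R :=
  \sum_(s : config) gibbs_weight J h s.

Definition gibbs (J : V -> V -> R) (h : V -> R) (s : config) : R :=
  gibbs_weight J h s / partition_fn J h.

Definition marginally_bounded (b : R) (mu : config -> R) : Prop :=
  forall (Lam : {set V}) (tau : config) (v : V) (c : bool), v \notin Lam ->
    b <= (\sum_(s : config | [forall u in Lam, s u == tau u] && (s v == c)) mu s)
         / (\sum_(s : config | [forall u in Lam, s u == tau u]) mu s).

Definition chi_div (alpha : R) (nu mu : config -> R) : R :=
  \sum_(s : config) mu s * (2^-1 * powR `|nu s / mu s - 1| alpha).

Definition d_par (E : rel V) (Jn : V -> V -> R) (hn : V -> R)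
    (Jm : V -> V -> R) (hm : V -> R) : R :=
  Num.max (\big[Num.max/0]_(u : V) \big[Num.max/0]_(v : V) `|Jn u v - Jm u v|)
          (\big[Num.max/0]_(v : V) (`|hn v - hm v| / ((deg E v).+1)%:R)).

End Ising.

(* Flipping the spin at v multiplies the Gibbs weight by exp (2 L_v), where
   L_v s = h_v + sum_w J_vw s_w is the local field. So on each pair {s, s^v}
   both Gibbs distributions are Bernoulli laws with log-odds 2 L_v, and with
   probabilities in [b, 1 - b] by marginal boundedness. As ln is
   (1/b)-Lipschitz on [b, 1], their probabilities differ by at least
   b |L_v^nu - L_v^mu|, and the chi^alpha contribution of the pair is at least
   its mu-mass times (b |L_v^nu - L_v^mu|)^alpha / 2.
   If every |J^nu_vu - J^mu_vu| is below c = |h^nu_v - h^mu_v| / (deg v + 1),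
   then |L_v^nu - L_v^mu| >= |h^nu_v - h^mu_v| - deg v * c = c everywhere.
   Otherwise some |J^nu_vu - J^mu_vu| >= c; flipping u shifts the gap of local
   fields by 2 (J^nu_vu - J^mu_vu), so of the two pairs exchanged by the flip
   at u, each carrying a b-fraction of their joint mu-mass, one has a gap of
   at least |J^nu_vu - J^mu_vu|. The constant b^(2 alpha) absorbs the
   resulting factors b^alpha and b^(1 + alpha). *)

From HB Require Import structures.
From mathcomp Require Import all_boot all_order all_algebra.
From mathcomp Require Import all_classical all_reals all_analysis.
From mathcomp Require Import ring lra.
Set Implicit Arguments.
Unset Strict Implicit.
Unset Printing Implicit Defensive.
Import Order.TTheory GRing.Theory Num.Theory.
Local Open Scope ring_scope.

Section RealInequalities.
Variable R : realType.
Implicit Types (alpha b : R).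

Lemma ln_le_subr1 (t : R) : 0 < t -> ln t <= t - 1.
Proof. by move=> t0; have := @le_ln1Dx R (t - 1); rewrite subrKC; apply; lra. Qed.

Lemma ler_dist_ln b (y z : R) : 0 < b -> b <= y -> b <= z ->
  `|ln y - ln z| <= `|y - z| / b.
Proof.
move=> b0; wlog zy : y z / z <= y.
  move=> W hy hz; have [zy|/ltW yz] := leP z y; first exact: W.
  by rewrite distrC (distrC y); apply: W.
move=> hy hz.
have [z0 y0] : 0 < z /\ 0 < y by split; apply: lt_le_trans b0 _.
have yz1 : 1 <= y / z by rewrite ler_pdivlMr // mul1r.
rewrite -ln_div ?posrE // ger0_norm ?ln_ge0 // ger0_norm ?subr_ge0 //.
apply: (le_trans (@ln_le_subr1 (y / z) (divr_gt0 y0 z0))).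
have -> : y / z - 1 = (y - z) / z by rewrite mulrBl divff ?gt_eqF.
by rewrite ler_wpM2l ?subr_ge0 // lef_pV2.
Qed.

Lemma ler_mul_powR alpha (m M D t : R) : 1 <= alpha -> 0 < m -> 0 <= M ->
  0 <= D -> M * D <= m * t -> D <= t -> M * D `^ alpha <= m * t `^ alpha.
Proof.
move=> a1 m0 M0 D0 MDmt Dt.
have a0 : 0 < alpha by apply: lt_le_trans a1.
have t0 : 0 <= t by apply: le_trans Dt.
rewrite -(mulr_powRB1 D0 a0) -(mulr_powRB1 t0 a0) !mulrA.
rewrite ler_pM ?mulr_ge0 ?powR_ge0 // ge0_ler_powR ?nnegrE //; lra.
Qed.

Definition chi_term alpha (n m : R) := m * (2^-1 * `|n / m - 1| `^ alpha).

Lemma chi_term_ge0 alpha (n m : R) : 0 <= m -> 0 <= chi_term alpha n m.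
Proof. by move=> m0; rewrite !mulr_ge0 ?powR_ge0 ?invr_ge0. Qed.

Lemma ler_chi_term alpha (n m M D : R) : 1 <= alpha -> 0 < m -> m <= M ->
  0 <= D -> D <= `|n - m| / M -> M * D `^ alpha / 2 <= chi_term alpha n m.
Proof.
move=> a1 m0 mM D0 hD; have M0 : 0 < M by apply: lt_le_trans mM.
have nm : `|n - m| = m * `|n / m - 1|.
  by rewrite -{2}(gtr0_norm m0) -normrM mulrBr mulr1 mulrCA divff ?gt_eqF ?mulr1.
rewrite /chi_term mulrCA mulrC ler_wpM2l ?invr_ge0 //.
apply: ler_mul_powR => //; first exact: ltW.
  by rewrite -nm mulrC -ler_pdivlMr.
apply: le_trans hD _.
by rewrite nm ler_pdivrMr // mulrC ler_wpM2l.
Qed.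

Lemma ler_dist_ratio (n n' m m' : R) : 0 < n -> 0 < n' -> 0 < m -> 0 < m' ->
  `|n / (n + n') - m / (m + m')| * (m + m') <= Num.max `|n - m| `|n' - m'|.
Proof.
move=> n0 n'0 m0 m'0; have N0 : 0 < n + n' by rewrite addr_gt0.
set p := n / (n + n'); set d := Num.max _ _.
have p0 : 0 <= p by rewrite divr_ge0 ?ltW.
have p1 : 0 <= 1 - p by rewrite subr_ge0 ler_pdivrMr // mul1r lerDl ltW.
rewrite -[X in _ * X]gtr0_norm ?addr_gt0 // -normrM.
have -> : (p - m / (m + m')) * (m + m') = (1 - p) * (n - m) - p * (n' - m').
  by rewrite /p; field; rewrite !gt_eqF ?addr_gt0.
apply: le_trans (ler_normB _ _) _.
rewrite normrM (normrM p) (ger0_norm p0) (ger0_norm p1).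
have -> : d = (1 - p) * d + p * d by ring.
by apply: lerD; apply: ler_wpM2l; rewrite // le_max lexx ?orbT.
Qed.

Lemma logit_ratio (n n' : R) : 0 < n -> 0 < n' ->
  ln (n / (n + n')) - ln (1 - n / (n + n')) = ln (n / n').
Proof.
move=> n0 n'0; have N0 : 0 < n + n' by rewrite addr_gt0.
have -> : 1 - n / (n + n') = n' / (n + n') by field; rewrite gt_eqF.
rewrite -ln_div ?posrE ?divr_gt0 //; congr ln; field.
by rewrite !gt_eqF.
Qed.

Lemma ler_logit_dist b (p q : R) : 0 < b -> b <= p -> b <= 1 - p ->
  b <= q -> b <= 1 - q ->
  b * `|(ln p - ln (1 - p)) - (ln q - ln (1 - q))| <= 2 * `|p - q|.
Proof.
move=> b0 bp bp' bq bq'.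
have -> : (ln p - ln (1 - p)) - (ln q - ln (1 - q))
        = (ln p - ln q) - (ln (1 - p) - ln (1 - q)) by ring.
rewrite mulrC -ler_pdivlMr // -mulrA mulr_natl mulr2n.
apply: le_trans (ler_normB _ _) (lerD _ _); first exact: ler_dist_ln.
have -> : p - q = (1 - q) - (1 - p) by ring.
by rewrite distrC ler_dist_ln.
Qed.

Lemma ler_chi_term_pair alpha b (a c n n' m m' : R) : 1 <= alpha -> 0 < b ->
  0 < n -> 0 < n' -> 0 < m -> 0 < m' ->
  n = n' * expR (2 * a) -> m = m' * expR (2 * c) ->
  b * (n + n') <= n -> b * (n + n') <= n' ->
  b * (m + m') <= m -> b * (m + m') <= m' ->
  (m + m') * (b * `|a - c|) `^ alpha / 2
    <= chi_term alpha n m + chi_term alpha n' m'.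
Proof.
move=> a1 b0 n0 n'0 m0 m'0 hn hm bn bn' bm bm'.
have [N0 M0] : 0 < n + n' /\ 0 < m + m' by rewrite !addr_gt0.
have logit_a : 2 * a = ln (n / (n + n')) - ln (1 - n / (n + n')).
  by rewrite logit_ratio // hn mulrAC divff ?gt_eqF // mul1r expRK.
have logit_c : 2 * c = ln (m / (m + m')) - ln (1 - m / (m + m')).
  by rewrite logit_ratio // hm mulrAC divff ?gt_eqF // mul1r expRK.
have compl (x y : R) : 0 < x + y -> 1 - x / (x + y) = y / (x + y).
  by move=> xy0; field; rewrite gt_eqF.
have gap : b * `|a - c| <= `|n / (n + n') - m / (m + m')|.
  have := @ler_logit_dist b (n / (n + n')) (m / (m + m')) b0.
  rewrite -logit_a -logit_c -mulrBr normrM gtr0_norm // mulrCA ler_pM2l //.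
  by apply; rewrite ?compl ?ler_pdivlMr.
have D0 : 0 <= b * `|a - c| by rewrite mulr_ge0 // ltW.
have : b * `|a - c| * (m + m') <= Num.max `|n - m| `|n' - m'|.
  exact: le_trans (ler_wpM2r (ltW M0) gap) (ler_dist_ratio n0 n'0 m0 m'0).
have [mM m'M] : m <= m + m' /\ m' <= m + m' by rewrite lerDl lerDr !ltW.
have := chi_term_ge0 alpha n (ltW m0).
have := chi_term_ge0 alpha n' (ltW m'0).
rewrite le_max -![_ * (m + m') <= _]ler_pdivlMr // => ? ? /orP[] hD.
- by have := ler_chi_term a1 m0 mM D0 hD; lra.
- by have := ler_chi_term a1 m'0 m'M D0 hD; lra.
Qed.

Lemma ler_mix_powR alpha b (A A' x x' y : R) : 0 <= alpha -> 0 <= b ->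
  0 <= y -> y <= Num.max x x' -> 0 <= A -> 0 <= A' ->
  b * (A + A') <= A -> b * (A + A') <= A' ->
  b * (A + A') * y `^ alpha <= A * x `^ alpha + A' * x' `^ alpha.
Proof.
move=> a0 b0 y0 + A0 A'0 bA bA'.
have bAA0 : 0 <= b * (A + A') by rewrite mulr_ge0 ?addr_ge0.
have [Px Px'] := (powR_ge0 x alpha, powR_ge0 x' alpha).
rewrite le_max => /orP[] yx; have ypow := ge0_ler_powR a0 y0 _ yx.
- apply: le_trans (ler_pM bAA0 (powR_ge0 _ _) bA (ypow _)) _.
    by rewrite nnegrE (le_trans y0).
  by rewrite lerDl mulr_ge0.
- apply: le_trans (ler_pM bAA0 (powR_ge0 _ _) bA' (ypow _)) _.
    by rewrite nnegrE (le_trans y0).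
  by rewrite lerDr mulr_ge0.
Qed.

Lemma powR_mul2_le b alpha : 0 < b -> b <= 1 -> 1 <= alpha ->
  b `^ (2 * alpha) <= b * b `^ alpha.
Proof.
move=> b0 b1 a1; have a0 : 0 < 1 + alpha by lra.
rewrite -{2}(powRr1 (ltW b0)) -powRD ?gt_eqF ?implybT //.
by apply: ger_powR; rewrite ?b0 ?b1 //; lra.
Qed.

End RealInequalities.

Section SpinFlips.
Variables (R : realType) (V : finType).
Implicit Types (s : config V) (u v w : V) (J : V -> V -> R) (h : V -> R).

Definition setspin s v (c : bool) : config V :=
  [ffun w => if w == v then c else s w].

Definition flip s v : config V := setspin s v (~~ s v).

Lemma setspin_id s v : setspin s v (s v) = s.
Proof. by apply/ffunP => w; rewrite ffunE; case: eqP => // ->. Qed.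

Lemma flip_at s v : flip s v v = ~~ s v.
Proof. by rewrite ffunE eqxx. Qed.

Lemma flip_neq s v w : w != v -> flip s v w = s w.
Proof. by rewrite ffunE => /negbTE ->. Qed.

Lemma flipK v : involutive (flip ^~ v).
Proof.
move=> s; apply/ffunP => w; rewrite !ffunE; case: eqP => [->|//].
by rewrite eqxx negbK.
Qed.

Lemma flipC s u v : flip (flip s u) v = flip (flip s v) u.
Proof.
have [->//|uv] := eqVneq u v.
have vu : (v == u) = false by rewrite eq_sym (negbTE uv).
apply/ffunP => w; rewrite !ffunE vu (negbTE uv).
by case: (eqVneq w v) => [->|_]; rewrite ?vu //; case: (w == u).
Qed.

Lemma sum_flip_pairs (F : config V -> R) v :
  \sum_s F s = \sum_(s : config V | s v) (F s + F (flip s v)).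
Proof.
rewrite (bigID (fun s : config V => s v)) /= big_split /=; congr (_ + _).
rewrite (reindex_inj (can_inj (flipK v))) /=.
by apply: eq_bigl => s; rewrite flip_at negbK.
Qed.

Lemma sum_flip_pairs_mul (mu : config V -> R) v (K : R) : \sum_s mu s = 1 ->
  \sum_(s : config V | s v) (mu s + mu (flip s v)) * K = K.
Proof. by move=> mu1; rewrite -mulr_suml -sum_flip_pairs mu1 mul1r. Qed.

Lemma agree_offE s v c s' :
  [forall u in [set~ v], s' u == s u] && (s' v == c) = (s' == setspin s v c).
Proof.
apply/andP/eqP => [[/forallP agree /eqP <-]|->]; last first.
  split; last by rewrite ffunE eqxx.
  by apply/forallP => u; apply/implyP; rewrite !inE ffunE => /negbTE ->.
apply/ffunP => w; rewrite ffunE; case: eqP => [->//|/eqP wv].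
by have := agree w; rewrite !inE wv => /eqP.
Qed.

Lemma marginally_bounded_flip b (mu : config V -> R) v s :
  (forall s, 0 < mu s) -> marginally_bounded b mu ->
  b * (mu s + mu (flip s v)) <= mu s /\
  b * (mu s + mu (flip s v)) <= mu (flip s v).
Proof.
move=> mu0 MB.
suff bound s' : b * (mu s' + mu (flip s' v)) <= mu s'.
  by split; rewrite // addrC -{2}(flipK v s); apply: bound.
have := MB [set~ v] s' v (s' v); rewrite !inE eqxx => /(_ isT).
rewrite (eq_bigl _ _ (agree_offE s' v (s' v))) setspin_id big_pred1_eq.
rewrite (bigID (fun t : config V => t v == s' v)) /=.
rewrite (eq_bigl _ _ (agree_offE s' v (s' v))) setspin_id big_pred1_eq.
rewrite (eq_bigl (pred1 (flip s' v))) ?big_pred1_eq; last first.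
  by move=> t /=; rewrite [flip _ _]/flip -agree_offE; case: (t v); case: (s' v).
by rewrite ler_pdivlMr ?addr_gt0 // mulrC.
Qed.

Lemma ising_model_diag0 E J h : simple_graph E -> ising_model E J h ->
  forall v, J v v = 0.
Proof.
move=> [_ Eirr] [_ JE] v; apply/eqP; apply: contraT => /JE Evv.
by have := Eirr v; rewrite Evv.
Qed.

Lemma quad_form_flip J (x y : V -> R) v :
  (forall u w, J u w = J w u) -> J v v = 0 ->
  (forall w, w != v -> x w = y w) -> x v = 1 -> y v = -1 ->
  \sum_u \sum_w J u w * x u * x w =
    \sum_u \sum_w J u w * y u * y w + 4 * \sum_w J v w * x w.
Proof.
move=> J_sym Jvv xy xv yv.
have row_v w : J v w * x v * x w - J v w * y v * y w = 2 * (J v w * x w).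
  have [->|wv] := eqVneq w v; first by rewrite Jvv; ring.
  by rewrite xv yv (xy w wv); ring.
have row_u u : u != v ->
    \sum_w (J u w * x u * x w - J u w * y u * y w) = 2 * (J v u * x u).
  move=> uv; rewrite (bigD1 v) //= big1 ?addr0.
    by rewrite (xy u uv) xv yv (J_sym u v); ring.
  by move=> w wv; rewrite (xy u uv) (xy w wv) subrr.
have row_vE : \sum_(u | u != v) 2 * (J v u * x u) = \sum_u 2 * (J v u * x u).
  by rewrite [RHS](bigD1 v) //= Jvv mul0r mulr0 add0r.
apply/eqP; rewrite addrC -subr_eq -sumrB; apply/eqP.
under eq_bigr => u _ do rewrite -sumrB.
rewrite (bigD1 v) //= (eq_bigr _ row_u) row_vE.
under eq_bigr => w _ do rewrite row_v.
by rewrite -!mulr_sumr; ring.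
Qed.

Definition local_field J h v s : R := h v + \sum_w J v w * spin R (s w).

Lemma local_field_flip J h v u s : s u ->
  local_field J h v s = local_field J h v (flip s u) + 2 * J v u.
Proof.
move=> su; rewrite /local_field (bigD1 u) //= [in RHS](bigD1 u) //= flip_at su.
rewrite (eq_bigr (fun w => J v w * spin R (flip s u w))); last first.
  by move=> w wu; rewrite flip_neq.
rewrite /spin /=; ring.
Qed.

Lemma gibbs_weight_flip J h v s :
  (forall u w, J u w = J w u) -> J v v = 0 -> s v ->
  gibbs_weight J h s
    = gibbs_weight J h (flip s v) * expR (2 * local_field J h v s).
Proof.
move=> J_sym Jvv sv.
have off_v w : w != v -> spin R (s w) = spin R (flip s v w).
  by move=> wv; rewrite flip_neq.
have at_v : spin R (s v) = 1 by rewrite sv.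
have at_v' : spin R (flip s v v) = -1 by rewrite flip_at sv.
have linear :
    \sum_w h w * spin R (s w) = \sum_w h w * spin R (flip s v w) + 2 * h v.
  rewrite (bigD1 v) //= [in RHS](bigD1 v) //= at_v at_v'.
  rewrite (eq_bigr _ (fun w wv => congr1 (fun x => h w * x) (off_v w wv))).
  by ring.
rewrite /gibbs_weight -expRD (quad_form_flip J_sym Jvv off_v at_v at_v') linear.
by congr expR; rewrite /local_field; field.
Qed.

Lemma gibbs_flip J h v s :
  (forall u w, J u w = J w u) -> J v v = 0 -> s v ->
  gibbs J h s = gibbs J h (flip s v) * expR (2 * local_field J h v s).
Proof.
by move=> J_sym Jvv sv; rewrite /gibbs (gibbs_weight_flip h J_sym Jvv sv) mulrAC.
Qed.

Lemma partition_fn_gt0 J h : 0 < partition_fn J h.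
Proof.
rewrite /partition_fn (bigD1 [ffun=> true]) //= ltr_pwDl ?expR_gt0 //.
by apply: sumr_ge0 => t _; exact/ltW/expR_gt0.
Qed.

Lemma gibbs_gt0 J h s : 0 < gibbs J h s.
Proof. by rewrite divr_gt0 ?expR_gt0 ?partition_fn_gt0. Qed.

Lemma gibbs_sum1 J h : \sum_s gibbs J h s = 1.
Proof. by rewrite -mulr_suml divff // gt_eqF ?partition_fn_gt0. Qed.

End SpinFlips.

Section DivergenceBounds.
Variables (R : realType) (V : finType) (alpha b : R).
Variables (Jn Jm : V -> V -> R) (hn hm : V -> R).
Hypotheses (a1 : 1 <= alpha) (b0 : 0 < b).
Hypotheses (Jn_sym : forall u w, Jn u w = Jn w u)
  (Jm_sym : forall u w, Jm u w = Jm w u).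
Hypotheses (Jn_diag : forall v, Jn v v = 0) (Jm_diag : forall v, Jm v v = 0).
Hypotheses (nu_bounded : marginally_bounded b (gibbs Jn hn))
  (mu_bounded : marginally_bounded b (gibbs Jm hm)).

Local Notation nu := (gibbs Jn hn).
Local Notation mu := (gibbs Jm hm).
Local Notation chi := (chi_div alpha nu mu).

Definition field_gap v (s : config V) :=
  local_field Jn hn v s - local_field Jm hm v s.

Lemma chi_div_ge0 : 0 <= chi.
Proof. by apply: sumr_ge0 => s _; apply/chi_term_ge0/ltW/gibbs_gt0. Qed.

Lemma chi_div_ge_pairs v :
  \sum_(s : config V | s v)
      (mu s + mu (flip s v)) * (b * `|field_gap v s|) `^ alpha / 2 <= chi.
Proof.
rewrite /chi_div (sum_flip_pairs _ v); apply: ler_sum => s sv.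
have [bn bn'] := marginally_bounded_flip v s (@gibbs_gt0 _ _ Jn hn) nu_bounded.
have [bm bm'] := marginally_bounded_flip v s (@gibbs_gt0 _ _ Jm hm) mu_bounded.
apply: (ler_chi_term_pair a1 b0) bn bn' bm bm'; try exact: gibbs_gt0.
  exact: gibbs_flip.
exact: gibbs_flip.
Qed.

Lemma chi_div_ge_uniform_gap v c : 0 <= c -> (forall s, c <= `|field_gap v s|) ->
  (b * c) `^ alpha / 2 <= chi.
Proof.
move=> c0 gap_c; apply: le_trans (chi_div_ge_pairs v).
rewrite -[X in X <= _](sum_flip_pairs_mul v ((b * c) `^ alpha / 2)
  (gibbs_sum1 Jm hm)).
apply: ler_sum => s _; rewrite mulrA ler_wpM2r ?invr_ge0 // ler_wpM2l //.
  by rewrite addr_ge0 // ltW ?gibbs_gt0.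
apply: ge0_ler_powR; rewrite ?nnegrE ?mulr_ge0 ?ler_wpM2l // ?(ltW b0) //.
exact: le_trans a1.
Qed.

Lemma chi_div_ge_coupling_gap v u : u != v ->
  b * (b * `|Jn v u - Jm v u|) `^ alpha / 2 <= chi.
Proof.
move=> uv; set c := `|Jn v u - Jm v u|.
pose A s := mu s + mu (flip s v).
have A0 s : 0 <= A s by rewrite addr_ge0 ?ltW ?gibbs_gt0.
have mass1 : \sum_(s : config V | s u)
    ((if s v then A s else 0) + (if flip s u v then A (flip s u) else 0)) = 1.
  rewrite -(sum_flip_pairs (fun s => if s v then A s else 0)) -big_mkcond /=.
  rewrite -[RHS](sum_flip_pairs_mul v 1 (gibbs_sum1 Jm hm)).
  by apply: eq_bigr => s _; rewrite mulr1.
apply: le_trans (chi_div_ge_pairs v).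
rewrite big_mkcond /= (sum_flip_pairs _ u) /=.
rewrite -[X in X <= _]mul1r -{1}mass1 mulr_suml.
apply: ler_sum => s su; rewrite flip_neq 1?eq_sym //.
case sv: (s v); last by rewrite !addr0 mul0r.
have [bA bA'] :
    b * (A s + A (flip s u)) <= A s /\ b * (A s + A (flip s u)) <= A (flip s u).
  have mu0 := @gibbs_gt0 _ _ Jm hm.
  have [m1 m2] := marginally_bounded_flip u s mu0 mu_bounded.
  have [m3 m4] := marginally_bounded_flip u (flip s v) mu0 mu_bounded.
  by rewrite -flipC in m3 m4; rewrite /A; split; lra.
have gap_max :
    b * c <= Num.max (b * `|field_gap v s|) (b * `|field_gap v (flip s u)|).
  have gapE : field_gap v s - field_gap v (flip s u) = 2 * (Jn v u - Jm v u).
    rewrite /field_gap (local_field_flip Jn hn v su).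
    by rewrite (local_field_flip Jm hm v su); ring.
  have := ler_normB (field_gap v s) (field_gap v (flip s u)).
  rewrite gapE normrM ger0_norm // -/c le_max !ler_pM2l // => h.
  by apply/orP; case: (leP c `|field_gap v s|) => ?; [left | right; lra].
have bc0 : 0 <= b * c := mulr_ge0 (ltW b0) (normr_ge0 _).
have := ler_mix_powR (le_trans ler01 a1) (ltW b0) bc0 gap_max (A0 s) (A0 _) bA bA'.
rewrite /A; lra.
Qed.

Lemma field_gap_ge (E : rel V) v s c :
  (forall u w, Jn u w != 0 -> E u w) -> (forall u w, Jm u w != 0 -> E u w) ->
  (forall u, E v u -> `|Jn v u - Jm v u| <= c) ->
  `|hn v - hm v| - (deg E v)%:R * c <= `|field_gap v s|.
Proof.
move=> Jn_E Jm_E Jc.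
set S := \sum_w (Jn v w - Jm v w) * spin R (s w).
have gapE : field_gap v s = (hn v - hm v) + S.
  have -> : S = \sum_w Jn v w * spin R (s w) - \sum_w Jm v w * spin R (s w).
    by rewrite -sumrB; apply: eq_bigr => w _; rewrite mulrBl.
  by rewrite /field_gap /local_field; ring.
have S_le : `|S| <= (deg E v)%:R * c.
  apply: le_trans (ler_norm_sum _ _ _) _.
  rewrite (bigID (E v)) /= [X in _ + X]big1 ?addr0 => [|w /negbTE nE]; last first.
    have [Jn0 Jm0] : Jn v w = 0 /\ Jm v w = 0.
      by split; apply/eqP; apply: contraFT nE; [apply: Jn_E | apply: Jm_E].
    by rewrite Jn0 Jm0 subrr mul0r normr0.
  have term_le w : E v w -> `|(Jn v w - Jm v w) * spin R (s w)| <= c.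
    move=> Evw; rewrite normrM.
    by case: (s w); rewrite /spin ?normrN normr1 mulr1 Jc.
  apply: le_trans (ler_sum _ term_le) _.
  rewrite (eq_bigl (fun w => w \in [set u | E v u])) => [|w]; last by rewrite inE.
  by rewrite sumr_const mulr_natl.
have := ler_normB (field_gap v s) S; rewrite gapE addrK; lra.
Qed.

Hypothesis b1 : b <= 1.

Lemma chi_div_ge_coupling u v :
  b `^ (2 * alpha) / 2 * `|Jn u v - Jm u v| `^ alpha <= chi.
Proof.
have [->|uv] := eqVneq u v.
  rewrite Jn_diag Jm_diag subrr normr0 powR0 ?mulr0; first exact: chi_div_ge0.
  by rewrite gt_eqF // (lt_le_trans ltr01 a1).
have vu : v != u by rewrite eq_sym.
apply: le_trans (chi_div_ge_coupling_gap vu).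
have := powR_mul2_le b0 b1 a1.
rewrite (powRM _ (ltW b0) (normr_ge0 _)).
have := powR_ge0 `|Jn u v - Jm u v| alpha; have := powR_ge0 b alpha; nra.
Qed.

Lemma chi_div_ge_field (E : rel V) v :
  (forall u w, Jn u w != 0 -> E u w) -> (forall u w, Jm u w != 0 -> E u w) ->
  b `^ (2 * alpha) / 2 * (`|hn v - hm v| / (deg E v).+1%:R) `^ alpha <= chi.
Proof.
move=> Jn_E Jm_E; set c := `|hn v - hm v| / _.
have c0 : 0 <= c := divr_ge0 (normr_ge0 _) (ler0n _ _).
have a0 : 0 <= alpha by apply: le_trans a1.
have [/existsP[u cu]|small] := boolP [exists u, c <= `|Jn v u - Jm v u|].
  apply: le_trans (chi_div_ge_coupling v u).
  rewrite ler_wpM2l ?divr_ge0 ?powR_ge0 //.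
  by apply: ge0_ler_powR; rewrite ?nnegrE.
have gap_c s : c <= `|field_gap v s|.
  have Jc u : E v u -> `|Jn v u - Jm v u| <= c.
    move=> _; rewrite leNgt; apply: contra small => /ltW cu.
    by apply/existsP; exists u.
  have hc : `|hn v - hm v| - (deg E v)%:R * c = c.
    by rewrite /c -natr1; field; rewrite natr1 pnatr_eq0.
  by rewrite -[X in X <= _]hc; apply: field_gap_ge.
apply: le_trans (chi_div_ge_uniform_gap c0 gap_c).
have Kb : b `^ (2 * alpha) <= b `^ alpha.
  by apply: le_trans (powR_mul2_le b0 b1 a1) _; rewrite ler_piMl ?powR_ge0.
rewrite (powRM _ (ltW b0) c0); have := powR_ge0 c alpha; nra.
Qed.

End DivergenceBounds.

Theorem lemma2p2 (R : realType) (V : finType) (E : rel V)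
    (alpha b : R) (Jn : V -> V -> R) (hn : V -> R) (Jm : V -> V -> R) (hm : V -> R) :
  simple_graph E ->
  1 <= alpha -> 0 < b -> b <= 1 ->
  ising_model E Jn hn -> ising_model E Jm hm ->
  marginally_bounded b (gibbs Jn hn) ->
  marginally_bounded b (gibbs Jm hm) ->
  powR b (2 * alpha) / 2 * powR (d_par E Jn hn Jm hm) alpha
    <= chi_div alpha (gibbs Jn hn) (gibbs Jm hm).
Proof.
move=> E_simple a1 b0 b1 Jn_ising Jm_ising nu_bounded mu_bounded.
have Jn_diag := ising_model_diag0 E_simple Jn_ising.
have Jm_diag := ising_model_diag0 E_simple Jm_ising.
case: Jn_ising Jm_ising => [Jn_sym Jn_E] [Jm_sym Jm_E].
have J_bound := chi_div_ge_coupling a1 b0 Jn_sym Jm_sym Jn_diag Jm_diag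
  nu_bounded mu_bounded b1.
have h_bound := chi_div_ge_field a1 b0 Jn_sym Jm_sym Jn_diag Jm_diag
  nu_bounded mu_bounded b1.
pose P x := b `^ (2 * alpha) / 2 * x `^ alpha
  <= chi_div alpha (gibbs Jn hn) (gibbs Jm hm).
have P0 : P 0.
  by rewrite /P powR0 ?mulr0 ?gt_eqF ?(lt_le_trans ltr01 a1) ?chi_div_ge0.
have Pmax x y : P x -> P y -> P (Num.max x y) by case: leP.
apply: (Pmax); apply: (big_ind P P0 Pmax) => v _; last exact: h_bound.
by apply: (big_ind P P0 Pmax) => u _; apply: J_bound.
Qed.
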